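(* Let $n\in\mathbb{N}$, $a<b$, and let $f:[a,b]\to\mathbb{R}$ be $(2n-1)$-convex. If $x_1,\dots,x_n\in(a,b)$, then there exists a polynomial $p\in\Pi_{2n-1}$ such that $p(x_i)=f(x_i)$ for $i=1,\dots,n$ and $p(x)\le f(x)$ for all $x\in[a,b]$.
   Context: $\Pi_m$ denotes the set of real polynomials of degree at most $m$. Divided differences are defined recursively by $[x_1;f]:=f(x_1)$ and $[x_1,\dots,x_{m+1};f]:=\frac{[x_2,\dots,x_{m+1};f]-[x_1,\dots,x_m;f]}{x_{m+1}-x_1}$ for pairwise distinct points. For $m\in\mathbb{N}$, a function $f$ on an interval $I$ is called $m$-convex if $[x_1,\dots,x_{m+2};f]\ge 0$ for all pairwise distinct $x_1,\dots,x_{m+2}\in I$. *)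

From HB Require Import structures.
From mathcomp Require Import all_boot all_order all_algebra.
From mathcomp Require Import reals.
Set Implicit Arguments. Unset Strict Implicit. Unset Printing Implicit Defensive.
Import Order.TTheory GRing.Theory Num.Theory.
Local Open Scope ring_scope.

Fixpoint divdiff (R : realType) (f : R -> R) (k : nat) (x : nat -> R) (i : nat)
  : R :=
  match k with
  | 0%N => f (x i)
  | k'.+1 => (divdiff f k' x i.+1 - divdiff f k' x i) / (x (i + k'.+1)%N - x i)
  end.

Definition mconvex (R : realType) (m : nat) (a b : R) (f : R -> R) : Prop :=
  forall x : nat -> R,
    (forall i, (i < m.+2)%N -> a <= x i <= b) ->
    (forall i j, (i < m.+2)%N -> (j < m.+2)%N -> i != j -> x i != x j) ->
    0 <= divdiff f m.+1 x 0.

(* Induction on n, removing one node c at a time. If f is (2n-1)-convex, the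
   slope y |-> (f y - f c) / (y - c) has nonnegative divided differences of
   order 2n-2 on nodes avoiding c, and its value at c can be chosen so that
   they stay nonnegative on all of [a, b]: each interpolant at c bounds the
   admissible values from one side, and continuity near c shows that no lower
   bound exceeds an upper one. Doing this twice writes
   f y = f c + d1 (y - c) + (y - c)^2 h y with h (2n-3)-convex, and the
   polynomial q obtained for h at the other nodes gives
   p = f c + d1 (X - c) + (X - c)^2 q. *)

From mathcomp Require Import all_boot all_order all_algebra.
From mathcomp Require Import reals.
From mathcomp Require Import ring.
From mathcomp Require Import classical_sets topology normedtype derive.
Import Order.TTheory GRing.Theory Num.Theory.
Import numFieldNormedType.Exports.
Local Open Scope ring_scope.

Set Implicit Arguments.
Unset Strict Implicit.
Unset Printing Implicit Defensive.

Section Interpolation.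
Variable R : fieldType.
Implicit Types (f g : R -> R) (s t : seq R) (c d u v y z : R).

Definition nodal s : {poly R} := \prod_(z <- s) ('X - z%:P).

Fixpoint interp f s : {poly R} :=
  if s is y :: t then
    interp f t + ((f y - (interp f t).[y]) / (nodal t).[y]) *: nodal t
  else 0.

(* The divided difference [s; f], whatever the order of [s] ([dd_perm]). *)
Definition dd f s := (interp f s)`_(size s).-1.

Definition slope f c y := (f y - f c) / (y - c).

Lemma size_nodal s : size (nodal s) = (size s).+1.
Proof. exact: size_prod_XsubC. Qed.

Lemma coef_nodal_size s : (nodal s)`_(size s) = 1.
Proof.
have := lead_coef_prod_XsubC s (fun _ => true) id.
by rewrite /lead_coef -/(nodal s) size_nodal.
Qed.

Lemma horner_nodal s y : (nodal s).[y] = \prod_(z <- s) (y - z).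
Proof. by rewrite horner_prod; apply: eq_bigr => z _; rewrite hornerXsubC. Qed.

Lemma horner_nodal_eq0 s y : ((nodal s).[y] == 0) = (y \in s).
Proof.
rewrite horner_nodal prodf_seq_eq0; apply/hasP/idP => [[z zs]|ys].
  by rewrite subr_eq0 => /eqP ->.
by exists y; rewrite //= subrr.
Qed.

Lemma size_interp f s : (size (interp f s) <= size s)%N.
Proof.
elim: s => [|y s IH] /=; first by rewrite size_poly0.
rewrite (leq_trans (size_polyD _ _)) // geq_max (leq_trans IH) //=.
by rewrite (leq_trans (size_scale_leq _ _)) // size_nodal.
Qed.

Lemma horner_interp f s z : uniq s -> z \in s -> (interp f s).[z] = f z.
Proof.
elim: s => [|y s IH] //= /andP[ys us]; rewrite in_cons => /orP[/eqP->|zs].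
  by rewrite hornerD hornerZ divfK ?horner_nodal_eq0 // addrC subrK.
have /eqP nodal_z : (nodal s).[z] == 0 by rewrite horner_nodal_eq0.
by rewrite hornerD hornerZ nodal_z mulr0 addr0 IH.
Qed.

Lemma interp_unique f s (p : {poly R}) : uniq s -> (size p <= size s)%N ->
  {in s, forall z, p.[z] = f z} -> p = interp f s.
Proof.
move=> us sp pf; apply/eqP; rewrite -subr_eq0; apply/negPn/negP => nz.
have roots : all (root (p - interp f s)) s.
  by apply/allP => z zs; rewrite /root !hornerE pf // horner_interp // subrr.
have := max_poly_roots nz roots us; rewrite ltnNge (leq_trans (size_polyD _ _)) //.
by rewrite size_polyN geq_max sp size_interp.
Qed.

Lemma interp_eq_in f g s : {in s, f =1 g} -> interp f s = interp g s.
Proof.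
elim: s => [|y s IH] //= fg; rewrite IH => [|z zs]; last exact/fg/mem_behead.
by rewrite fg // mem_head.
Qed.

Lemma dd_eq_in f g s : {in s, f =1 g} -> dd f s = dd g s.
Proof. by move=> fg; rewrite /dd (interp_eq_in fg). Qed.

Lemma interp_perm f s t : uniq s -> perm_eq s t -> interp f s = interp f t.
Proof.
move=> us st; have ut : uniq t by rewrite -(perm_uniq st).
apply: interp_unique => //; first by rewrite -(perm_size st) size_interp.
by move=> z; rewrite -(perm_mem st); apply: horner_interp.
Qed.

Lemma dd_perm f s t : uniq s -> perm_eq s t -> dd f s = dd f t.
Proof. by move=> us st; rewrite /dd (interp_perm f us st) (perm_size st). Qed.

Lemma dd1 f z : dd f [:: z] = f z.
Proof.
by rewrite /dd /= /nodal big_nil !hornerE subr0 divr1 alg_polyC coefC.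
Qed.

Lemma dd_cons f y s : y \notin s ->
  dd f (y :: s) = (f y - (interp f s).[y]) / (nodal s).[y].
Proof.
move=> ys; rewrite /dd /= coefD coefZ coef_nodal_size mulr1.
by rewrite nth_default ?size_interp // add0r.
Qed.

Lemma interp_cons_slope f c s : uniq (c :: s) ->
  interp f (c :: s) = (f c)%:P + ('X - c%:P) * interp (slope f c) s.
Proof.
move=> ucs; have /andP[cs us] := ucs; symmetry; apply: interp_unique => //.
  rewrite (leq_trans (size_polyD _ _)) // geq_max (leq_trans (size_polyC_leq1 _)) //=.
  by rewrite (leq_trans (size_polyMleq _ _)) // size_XsubC ltnS size_interp.
move=> z; rewrite in_cons => /predU1P[->|zs].
  by rewrite !hornerE subrr mul0r addr0.
have zc : z - c != 0 by rewrite subr_eq0; apply: contraNneq cs => <-.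
by rewrite !hornerE horner_interp // /slope mulrC divfK // addrC subrK.
Qed.

Lemma dd_cons_slope f c s : uniq (c :: s) -> s != [::] ->
  dd f (c :: s) = dd (slope f c) s.
Proof.
move=> ucs sn0; rewrite /dd interp_cons_slope //= coefD coefC mulrBl coefB.
rewrite coefXM coefCM; case: s sn0 ucs => [|y s] //= _ _.
rewrite [_`_(size s).+1]nth_default; last exact: (size_interp _ (y :: s)).
by rewrite add0r [c * _]mulr0 subr0.
Qed.

Lemma interp_neville f u v s : uniq (u :: rcons s v) ->
  interp f (u :: rcons s v) =
  (v - u)^-1 *: (('X - u%:P) * interp f (rcons s v) - ('X - v%:P) * interp f (u :: s)).
Proof.
move=> uvs; set A := interp f (rcons s v); set B := interp f (u :: s).
have [usv uus] : uniq (rcons s v) /\ uniq (u :: s).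
  move: uvs; rewrite /= mem_rcons in_cons negb_or rcons_uniq.
  by move=> /andP[/andP[_ us] /andP[vs ss]]; split; rewrite ?rcons_uniq /= ?vs ?us ?ss.
have vu : v - u != 0.
  have /andP[uv _] := uvs.
  by rewrite subr_eq0; apply: contraNneq uv => ->; rewrite mem_rcons mem_head.
symmetry; apply: interp_unique => //.
  rewrite /= size_rcons (leq_trans (size_scale_leq _ _)) // (leq_trans (size_polyD _ _)) //.
  rewrite size_polyN geq_max; apply/andP; split;
    rewrite (leq_trans (size_polyMleq _ _)) // size_XsubC ltnS (leq_trans (size_interp _ _)) //=.
  by rewrite size_rcons.
have hA z : z \in rcons s v -> A.[z] = f z by exact: horner_interp.
have hB z : z \in u :: s -> B.[z] = f z by exact: horner_interp.
move=> z; rewrite hornerZ hornerD hornerN !hornerM !hornerXsubC in_cons.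
case/predU1P=> [->|zsv]; first by rewrite subrr mul0r add0r hB ?mem_head //; field.
have [->|zv] := eqVneq z v; first by rewrite subrr mul0r subr0 hA ?mem_rcons ?mem_head //; field.
have zs : z \in s by move: zsv; rewrite mem_rcons in_cons (negPf zv).
by rewrite hA ?hB ?mem_rcons ?in_cons ?zs ?orbT //; field.
Qed.

Lemma dd_cons_rcons f u v s : uniq (u :: rcons s v) ->
  dd f (u :: rcons s v) = (dd f (rcons s v) - dd f (u :: s)) / (v - u).
Proof.
move=> uvs; rewrite /dd interp_neville //.
set A := interp f (rcons s v); set B := interp f (u :: s).
have sA : (size A <= (size s).+1)%N by rewrite -(size_rcons s v) size_interp.
have sB : (size B <= (size s).+1)%N by exact: size_interp.
rewrite /= size_rcons coefZ coefB [_ * A]mulrBl [_ * B]mulrBl !coefB !coefXM !coefCM /=.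
by rewrite [A`_(size s).+1]nth_default // [B`_(size s).+1]nth_default // !mulr0 !subr0 mulrC.
Qed.

Lemma dd_update_notin f c d s : c \notin s -> dd [eta f with c |-> d] s = dd f s.
Proof. by move=> cs; apply: dd_eq_in => z zs /=; case: eqVneq zs cs => // -> ->. Qed.

Lemma dd_cons_update f c d t : c \notin t ->
  dd [eta f with c |-> d] (c :: t) = (d - (interp f t).[c]) / (nodal t).[c].
Proof.
move=> ct; rewrite dd_cons // /= eqxx (@interp_eq_in _ f) // => z zt /=.
by case: eqVneq zt ct => // -> ->.
Qed.

Lemma sub_taylor2 f c d1 d2 (q : {poly R}) y :
  f y - ((f c)%:P + d1 *: ('X - c%:P) + ('X - c%:P) ^+ 2 * q).[y] =
  (y - c) ^+ 2 * ([eta slope [eta slope f c with c |-> d1] c with c |-> d2] y - q.[y]).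
Proof.
rewrite !hornerE; have [->|yc] := eqVneq y c; first by rewrite !subrr; ring.
have yc0 : y - c != 0 by rewrite subr_eq0.
by rewrite /slope /= !(negPf yc) eqxx; field.
Qed.

Lemma size_taylor2 k c c0 c1 (q : {poly R}) : (size q <= k)%N ->
  (size (c0%:P + c1 *: ('X - c%:P) + ('X - c%:P) ^+ 2 * q)%R <= k.+2)%N.
Proof.
move=> sq; rewrite (leq_trans (size_polyD _ _)) // geq_max.
rewrite (leq_trans (size_polyMleq _ _)) ?size_exp_XsubC ?addSn ?ltnS ?add1n ?ltnS ?sq //.
rewrite (leq_trans (size_polyD _ _)) // geq_max (leq_trans (size_polyC_leq1 _)) //=.
by rewrite (leq_trans (size_scale_leq _ _)) // size_XsubC.
Qed.

End Interpolation.

Lemma mkseq_cons T (F : nat -> T) n : mkseq F n.+1 = F 0%N :: mkseq (F \o succn) n.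
Proof. by rewrite /mkseq /= -(addn0 1%N) iotaDl -map_comp. Qed.

Section HigherConvexity.
Variable R : realType.
Implicit Types (f G : R -> R) (a b c d lo hi : R) (s t L : seq R).

Lemma divdiffE f (x : nat -> R) k i : uniq (mkseq (x \o addn i) k.+1) ->
  divdiff f k x i = dd f (mkseq (x \o addn i) k.+1).
Proof.
elim: k i => [|k IH] i.
  by move=> _; rewrite /mkseq /= addn0 dd1.
set m := mkseq (x \o addn i.+1) k.
have shift : mkseq ((x \o addn i) \o succn) k = m.
  by apply: eq_mkseq => j /=; rewrite addnS.
have -> : mkseq (x \o addn i) k.+2 = x i :: rcons m (x (i + k.+1)%N).
  by rewrite mkseq_cons mkseqS /= addn0 -shift.
have tail_nodes : mkseq (x \o addn i.+1) k.+1 = rcons m (x (i + k.+1)%N).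
  by rewrite mkseqS /= addSnnS.
have init_nodes : mkseq (x \o addn i) k.+1 = x i :: m.
  by rewrite mkseq_cons /= addn0 shift.
move=> uvs; have /andP[_ um] := uvs.
have uum : uniq (x i :: m).
  by apply: subseq_uniq uvs; rewrite -cats1 -cat_cons prefix_subseq.
by rewrite dd_cons_rcons // -tail_nodes -init_nodes -!IH ?tail_nodes ?init_nodes.
Qed.

Definition dd_nonneg (r : nat) (pT : predType R) (A : pT) f := forall s,
  uniq s -> size s = r -> {subset s <= A} -> 0 <= dd f s.

Lemma mconvex_dd_nonneg m a b f : mconvex m a b f -> dd_nonneg m.+2 `[a, b] f.
Proof.
move=> fconv s us ss sab.
have nodes_s : mkseq (nth 0 s \o addn 0) m.+2 = s.
  by rewrite -ss -[RHS](mkseq_nth 0); apply: eq_mkseq.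
have := fconv (nth 0 s); rewrite divdiffE nodes_s //; apply=> [i|i j]; rewrite -ss => ilt.
  by have := sab _ (mem_nth 0 ilt); rewrite in_itv.
by move=> jlt; rewrite nth_uniq.
Qed.

Lemma dd_nonneg_slope r (pT : predType R) (A : pT) f c : c \in A -> (0 < r)%N ->
  dd_nonneg r.+1 A f -> dd_nonneg r [predD1 A & c] (slope f c).
Proof.
move=> cA r0 fA s us ss sA; have cs : c \notin s by apply/negP => /sA; rewrite inE eqxx.
rewrite -dd_cons_slope /= ?cs ?us //; last by rewrite -size_eq0 ss -lt0n.
apply: fA; rewrite /= ?cs ?us ?ss // => z; rewrite in_cons => /predU1P[->//|/sA].
by rewrite inE => /andP[].
Qed.

Lemma horner_nodal_gt0 t c : {in t, forall z, z < c} -> 0 < (nodal t).[c].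
Proof. by move=> tc; rewrite horner_nodal big_seq prodr_gt0 // => z /tc; rewrite subr_gt0. Qed.

Lemma exists_uniq_in_itv n lo hi : lo < hi ->
  exists s, [/\ uniq s, size s = n & {subset s <= `]lo, hi[}].
Proof.
rewrite -subr_gt0 => e0; exists (mkseq (fun i => lo + (hi - lo) / i.+2%:R) n).
split; [|exact: size_mkseq|].
  apply: mkseq_uniq => i j /addrI /(mulfI (lt0r_neq0 e0)) /invr_inj /eqP.
  by rewrite eqr_nat => /eqP[].
move=> _ /mapP[i _ ->]; have i0 : 0 < i.+2%:R :> R by rewrite ltr0n.
rewrite in_itv /= ltrDl divr_gt0 //= -ltrBrDl ltr_pdivrMr // ltr_pMr //.
by rewrite ltr1n.
Qed.

Lemma exists_notin_itv L lo hi : lo < hi -> exists2 y, y \in `]lo, hi[ & y \notin L.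
Proof.
move=> lohi; have [s [us ss sI]] := exists_uniq_in_itv (size L).+1 lohi.
have [/hasP[y ys yL]|/hasPn sL] := boolP (has [predC L] s); first by exists y; rewrite ?sI.
have := uniq_leq_size us (fun y ys => negbNE (sL y ys)).
by rewrite ss ltnn.
Qed.

Lemma near_right_notin (P : R -> Prop) L c : (\forall y \near c, P y) ->
  exists y, [/\ c < y, y \notin L & P y].
Proof.
move=> /nbhs_ballP[e e0 cP]; have [|y] := @exists_notin_itv L c (c + e).
  by rewrite ltrDl.
rewrite in_itv /= => /andP[cy ye] yL; exists y; split => //; apply: cP.
by rewrite /ball /= distrC ger0_norm ?subr_ge0 ?ltW // ltrBlDl.
Qed.

Lemma mem_predD1_itv a b c z : a < z < b -> z != c -> z \in [predD1 `[a, b] & c].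
Proof. by move=> /andP[az zb] zc; rewrite inE zc /= in_itv /= !ltW. Qed.

Lemma nodes_left n a b c : a < c -> c < b -> exists t,
  [/\ uniq t, size t = n, {subset t <= [predD1 `[a, b] & c]} & 0 < (nodal t).[c]].
Proof.
move=> ac cb; have [t [ut st tI]] := exists_uniq_in_itv n ac.
have tc : {in t, forall z, a < z < c} by move=> z /tI; rewrite in_itv.
exists t; split => //; last by apply: horner_nodal_gt0 => z /tc /andP[].
move=> z /tc /andP[az zc]; rewrite mem_predD1_itv ?lt_eqF //.
by rewrite az (lt_trans zc).
Qed.

Lemma nodes_right n a b c : a < c -> c < b -> exists t,
  [/\ uniq t, size t = n.+1, {subset t <= [predD1 `[a, b] & c]} & (nodal t).[c] < 0].
Proof.
move=> ac cb; have [y] := exists_notin_itv [::] cb; rewrite in_itv /= => /andP[cy yb] _.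
have [t [ut st tI]] := exists_uniq_in_itv n ac.
have tc : {in t, forall z, a < z < c} by move=> z /tI; rewrite in_itv.
have yt : y \notin t by apply/negP => /tc /andP[_]; rewrite ltNge ltW.
exists (y :: t); split; rewrite /= ?yt ?st //.
  move=> z; rewrite in_cons => /predU1P[->|/tc /andP[az zc]].
    by rewrite mem_predD1_itv ?gt_eqF // yb (lt_trans ac).
  by rewrite mem_predD1_itv ?lt_eqF // az (lt_trans zc).
rewrite /nodal big_cons -/(nodal t) hornerM hornerXsubC nmulr_rlt0 ?subr_lt0 //.
by apply: horner_nodal_gt0 => z /tc /andP[].
Qed.

Section Extension.
Variables (r : nat) (a b c : R) (G : R -> R).
Hypotheses (ac : a < c) (cb : c < b).
Hypothesis G_dd : dd_nonneg r.+1 [predD1 `[a, b] & c] G.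

Let off_nodes t := [/\ uniq t, size t = r & {subset t <= [predD1 `[a, b] & c]}].

Lemma interp_le_interp t1 t2 : off_nodes t1 -> off_nodes t2 ->
  0 < (nodal t1).[c] -> (nodal t2).[c] < 0 -> (interp G t1).[c] <= (interp G t2).[c].
Proof.
move=> [u1 s1 i1] [u2 s2 i2] w1 w2; rewrite leNgt; apply/negP => lt21.
have : \forall y \near c, [/\ y < b, 0 < (nodal t1).[y], (nodal t2).[y] < 0
                           & (interp G t2).[y] < (interp G t1).[y]].
  have near_gt p : 0 < p.[c] -> \forall y \near c, 0 < p.[y].
    by move=> pc; apply: (cvgr_gt _ (@continuous_horner R p c)).
  near=> y; split; near: y; first exact: lt_nbhsl.
  - exact: near_gt.
  - by apply: filterS (near_gt (- nodal t2) _) => [y|]; rewrite hornerN oppr_gt0.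
  - apply: filterS (near_gt (interp G t1 - interp G t2) _) => [y|];
      by rewrite hornerD hornerN subr_gt0.
(* Just right of [c], [dd G (y :: t1) >= 0] and [dd G (y :: t2) >= 0] force
   [interp G t1 <= G <= interp G t2] at [y], against the order at [c]. *)
move=> /(near_right_notin (t1 ++ t2))[y [cy]].
rewrite mem_cat negb_or => /andP[yt1 yt2] [yb n1 n2 lt21y].
have yI : y \in [predD1 `[a, b] & c].
  by rewrite inE gt_eqF //= in_itv /= !ltW // (lt_trans ac).
have dd_y t : y \notin t -> uniq t -> size t = r -> {subset t <= [predD1 `[a, b] & c]} ->
    0 <= (G y - (interp G t).[y]) / (nodal t).[y].
  move=> yt ut st tI; rewrite -dd_cons //; apply: G_dd; rewrite /= ?yt ?ut ?st //.
  by move=> z; rewrite in_cons => /predU1P[->|/tI].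
have := dd_y _ yt1 u1 s1 i1; rewrite ler_pdivlMr // mul0r subr_ge0 => le1.
have := dd_y _ yt2 u2 s2 i2; rewrite ler_ndivlMr // mul0r subr_le0 => le2.
by move: lt21y; rewrite ltNge (le_trans le1 le2).
Unshelve. all: by end_near.
Qed.

Lemma exists_update_dd_nonneg : (0 < r)%N ->
  exists d, dd_nonneg r.+1 `[a, b] [eta G with c |-> d].
Proof.
(* By [dd_cons_update], [d] works iff [d >= (interp G t).[c]] when
   [(nodal t).[c] > 0] and [d <= (interp G t).[c]] when [(nodal t).[c] < 0]. *)
move=> r0.
pose lower := [set (interp G t).[c] | t in [set t | off_nodes t /\ 0 < (nodal t).[c]]]%classic.
have [tl [ul sl il wl]] := nodes_left r ac cb.
have [tu [uu su iu wu]] := nodes_right r.-1 ac cb; rewrite prednK // in su.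
have ub_lower t : off_nodes t -> (nodal t).[c] < 0 -> ubound lower (interp G t).[c].
  by move=> tP wt _ [t' [t'P wt'] <-]; apply: interp_le_interp.
have lower_sup : has_sup lower.
  by split; [exists (interp G tl).[c], tl | exists (interp G tu).[c]; apply: ub_lower].
exists (sup lower) => s us ss sab.
have [cs|cs] := boolP (c \in s); last first.
  rewrite dd_update_notin //; apply: G_dd => // z zs; rewrite inE sab // andbT.
  by apply: contraNneq cs => <-.
have ct : c \notin rem c s by rewrite mem_rem_uniqF.
have tP : off_nodes (rem c s).
  split; [exact: rem_uniq | by rewrite size_rem // ss |].
  by move=> z zt; rewrite inE (sab z (mem_rem zt)) andbT; apply: contraTneq zt => ->.
rewrite (dd_perm _ us (perm_to_rem cs)) dd_cons_update //.
have : (nodal (rem c s)).[c] != 0 by rewrite horner_nodal_eq0.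
rewrite neq_lt => /orP[w|w].
  rewrite ler_ndivlMr // mul0r subr_le0; apply: ge_sup; last exact: ub_lower.
  by case: lower_sup.
rewrite divr_ge0 ?(ltW w) // subr_ge0.
by apply: (sup_upper_bound lower_sup); exists (rem c s).
Qed.

End Extension.

Lemma dd_nonneg_extend r a b c G : a < c < b ->
  dd_nonneg r [predD1 `[a, b] & c] G -> exists d, dd_nonneg r `[a, b] [eta G with c |-> d].
Proof.
move=> /andP[ac cb]; case: r => [|[|r]] G_dd; last exact: exists_update_dd_nonneg.
  by exists 0 => s _ /size0nil -> _; apply: (G_dd [::]).
exists 0 => -[|z []] // _ _ zI; rewrite dd1 /=; have [//|zc] := eqVneq z c.
rewrite -dd1; apply: (G_dd [:: z]) => // y; rewrite inE => /eqP ->.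
by rewrite inE zc zI ?mem_head.
Qed.

Lemma interp_below k a b f xs : dd_nonneg (k.*2).+1 `[a, b] f ->
  size xs = k -> {subset xs <= `]a, b[} -> exists p : {poly R},
  [/\ (size p <= k.*2)%N, {in xs, forall x, p.[x] = f x}
    & {in `[a, b], forall y, p.[y] <= f y}].
Proof.
elim: k a b f xs => [|k IH] a b f [|c xs] // f_dd.
  move=> _ _; exists 0; split=> // [|y yI]; first by rewrite size_poly0.
  by rewrite horner0 -dd1; apply: (f_dd [:: y]) => // z; rewrite inE => /eqP->.
move=> [sxs] cxsI; have acb : a < c < b by have := cxsI c (mem_head _ _); rewrite in_itv.
have cI : c \in `[a, b] by case/andP: acb => ac cb; rewrite in_itv /= !ltW.
rewrite doubleS in f_dd.
have [d1 G1_dd] := dd_nonneg_extend acb (dd_nonneg_slope cI (ltn0Sn _) f_dd).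
have [d2 H_dd] := dd_nonneg_extend acb (dd_nonneg_slope cI (ltn0Sn _) G1_dd).
have xsI : {subset xs <= `]a, b[} by move=> x xs_x; apply/cxsI/mem_behead.
have [q [sq qxs qI]] := IH a b _ xs H_dd sxs xsI.
exists ((f c)%:P + d1 *: ('X - c%:P) + ('X - c%:P) ^+ 2 * q); split.
- by rewrite doubleS size_taylor2.
- move=> x x_cxs; apply/eqP; rewrite eq_sym -subr_eq0 (sub_taylor2 _ _ _ d2).
  move: x_cxs; rewrite in_cons => /predU1P[->|/qxs->]; first by rewrite subrr expr0n mul0r.
  by rewrite subrr mulr0.
- by move=> y yI; rewrite -subr_ge0 (sub_taylor2 _ _ _ d2) mulr_ge0 ?sqr_ge0 // subr_ge0 qI.
Qed.

End HigherConvexity.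

Theorem corollary2 (R : realType) (n : nat) (a b : R) (f : R -> R)
  (n_gt0 : (0 < n)%N) (ab : a < b)
  (fconv : mconvex (n.*2).-1 a b f)
  (x : 'I_n -> R) (xin : forall i, a < x i < b) :
  exists p : {poly R},
    (size p <= n.*2)%N /\
    (forall i, p.[x i] = f (x i)) /\
    (forall y, a <= y <= b -> p.[y] <= f y).
Proof.
have f_dd := mconvex_dd_nonneg fconv; rewrite prednK ?double_gt0 // in f_dd.
have size_xs : size [seq x i | i <- enum 'I_n] = n by rewrite size_map size_enum_ord.
have xsI : {subset [seq x i | i <- enum 'I_n] <= `]a, b[}.
  by move=> _ /mapP[i _ ->]; rewrite in_itv xin.
have [p [size_p p_xs p_le]] := interp_below f_dd size_xs xsI.
exists p; split=> //; split=> [i|y yab]; first by rewrite p_xs ?map_f ?mem_enum.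
by rewrite p_le ?in_itv.
Qed.
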